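(* For a strict monoidal simplicial category $\mathcal{C}$, there is an isomorphism of simplicial categories $\mathcal{C}^\otimes\cong\mathbf{Gr}\,\mathcal{C}^\bullet$.
   Context: A strict monoidal simplicial category is a monoid $(\mathcal{C},\otimes,\mathbf{1})$ in $(\mathbf{sCat},\times,* )$. $\mathcal{C}^\otimes$: objects are finite sequences $[x_1,\dots,x_n]$ of objects of $\mathcal{C}$; hom simplicial sets $\coprod_{f\in\Delta([m],[n])}\prod_{1\le i\le m}\mathcal{C}(x_{f(i-1)+1}\otimes\cdots\otimes x_{f(i)},y_i)$ from $[x_1,\dots,x_n]$ to $[y_1,\dots,y_m]$ (empty tensor $=\mathbf{1}$); composition $[g;g_i]\circ[f;f_i]=[f\circ g;h_i]$, $h_i=g_i\circ(f_{g(i-1)+1}\otimes\cdots\otimes f_{g(i)})$. $\mathcal{C}^\bullet\colon\Delta^{\mathrm{op}}\to\mathbf{sCat}$ sends $[n]$ to $\mathcal{C}^n$ and a map $f\colon[m]\to[n]$ of $\Delta$ to the simplicial functor $\mathcal{C}^f\colon\mathcal{C}^n\to\mathcal{C}^m$, $(x_1,\dots,x_n)\mapsto(y_1,\dots,y_m)$ with $y_i=x_{f(i-1)+1}\otimes\cdots\otimes x_{f(i)}$, and similarly on morphisms via $\otimes$ (face maps act by the monoidal product on adjacent coordinates or by the terminal functor at the ends, degeneracies insert the unit). For $F\colon\mathcal{D}\to\mathbf{sCat}$, $\mathbf{Gr}\,F$ is the simplicial category with objects $(x,c)$, $x\in Fc$, hom simplicial sets $\coprod_{\varphi\colon c\to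 d}Fd(F\varphi\,x,y)\times\{\varphi\}$, and composition $(\tau,\psi)\circ(\sigma,\varphi)=(\tau\circ F\psi(\sigma),\psi\varphi)$. *)

From mathcomp Require Import all_boot.
From mathcomp Require Import zify.
From Stdlib Require Import FunctionalExtensionality.
Set Implicit Arguments.
Unset Strict Implicit.
Unset Printing Implicit Defensive.

(* The simplex category Delta: maps [m] -> [n] are monotone maps        *)
(* {0..m} -> {0..n}.                                                    *)

Definition monob m n (f : {ffun 'I_m.+1 -> 'I_n.+1}) : bool :=
  [forall i : 'I_m.+1, forall j : 'I_m.+1, (i <= j) ==> (f i <= f j)].

Definition mono (m n : nat) := {f : {ffun 'I_m.+1 -> 'I_n.+1} | monob f}.

Definition mono_fun m n (f : mono m n) : 'I_m.+1 -> 'I_n.+1 := fun i => val f i.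
Coercion mono_fun : mono >-> Funclass.

Lemma monoP m n (f : mono m n) (i j : 'I_m.+1) : i <= j -> f i <= f j.
Proof.
case: f => f Hf hij; rewrite /mono_fun /=.
move/forallP: Hf => /(_ i) /forallP /(_ j) /implyP; exact.
Qed.

Lemma mono_id_proof n : monob [ffun i : 'I_n.+1 => i].
Proof. by apply/forallP=> i; apply/forallP=> j; apply/implyP; rewrite !ffunE. Qed.

Definition mono_id n : mono n n := exist (fun f => monob f) _ (mono_id_proof n).

Lemma mono_comp_proof m n p (f : mono m n) (g : mono p m) :
  monob [ffun i : 'I_p.+1 => f (g i)].
Proof.
apply/forallP=> i; apply/forallP=> j; apply/implyP=> hij; rewrite !ffunE.
by apply: monoP; apply: monoP.
Qed.

Definition mono_comp m n p (f : mono m n) (g : mono p m) : mono p n :=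
  exist (fun f => monob f) _ (mono_comp_proof f g).

Lemma mono_to0_proof k : monob [ffun _ : 'I_k.+1 => (ord0 : 'I_1)].
Proof. by apply/forallP=> i; apply/forallP=> j; apply/implyP; rewrite !ffunE. Qed.

Definition mono_to0 k : mono k 0 := exist (fun f => monob f) _ (mono_to0_proof k).

Record sSet := SSet {
  ssX :> nat -> Type;
  ssA : forall m n, mono m n -> ssX n -> ssX m
}.
Arguments ssA {s m n}.

Definition is_sSet (X : sSet) : Prop :=
  (forall n (x : X n), ssA (mono_id n) x = x) /\
  (forall m n p (f : mono m n) (g : mono p m) (x : X n),
      ssA (mono_comp f g) x = ssA g (ssA f x)).

Record sCatD := SCatD {
  obj : Type;
  hom : obj -> obj -> sSet;
  comp : forall (x y z : obj) (k : nat), hom y z k -> hom x y k -> hom x z k;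
  idm : forall x : obj, hom x x 0
}.
Arguments comp {s x y z k}.
Arguments idm {s}.

(* the identity of x, as a degenerate k-simplex *)
Definition idk (C : sCatD) (x : obj C) (k : nat) : hom x x k :=
  ssA (mono_to0 k) (idm x).

Definition is_sCat (C : sCatD) : Prop :=
  [/\ (forall x y : obj C, is_sSet (hom x y)),
      (forall x y z : obj C, forall m n (f : mono m n) (g : hom y z n) (h : hom x y n),
          ssA f (comp g h) = comp (ssA f g) (ssA f h)),
      (forall x y z w : obj C, forall k (f : hom z w k) (g : hom y z k) (h : hom x y k),
          comp f (comp g h) = comp (comp f g) h),
      (forall x y : obj C, forall k (h : hom x y k), comp (idk y k) h = h) &
      (forall x y : obj C, forall k (h : hom x y k), comp h (idk x k) = h)].

Definition castH (C : sCatD) (a a' b b' : obj C) (ea : a = a') (eb : b = b')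
  (k : nat) (h : hom a b k) : hom a' b' k :=
  match ea in _ = a2 return hom a2 b' k with
  | erefl => match eb in _ = b2 return hom a b2 k with erefl => h end
  end.

Record sFun (A B : sCatD) := SFun {
  fo : obj A -> obj B;
  fh : forall (x y : obj A) (k : nat), hom x y k -> hom (fo x) (fo y) k
}.
Arguments fo {A B}.
Arguments fh {A B} s {x y k}.

Definition is_sFunctor (A B : sCatD) (F : sFun A B) : Prop :=
  [/\ (forall x y : obj A, forall m n (f : mono m n) (h : hom x y n), fh F (ssA f h) = ssA f (fh F h)),
      (forall x y z : obj A, forall k (g : hom y z k) (h : hom x y k),
          fh F (comp g h) = comp (fh F g) (fh F h)) &
      (forall x : obj A, fh F (idm x) = idm (fo F x))].

Definition sCat_iso (A B : sCatD) : Prop :=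
  exists F : sFun A B,
    [/\ is_sFunctor F, bijective (fo F) &
        forall (x y : obj A) (k : nat), bijective (@fh A B F x y k)].

(* Strict monoidal simplicial categories: monoids in (sCat, x, * ).     *)
(* The tensor is a simplicial functor C x C -> C, the unit is a         *)
(* simplicial functor * -> C (i.e. an object, sent on k-simplices to    *)
(* the degenerate identity), and associativity / unitality hold         *)
(* strictly (equalities of functors: on objects, and on simplices of    *)
(* homs up to the transport along the object equalities).              *)

Record SMsCat := SMSCat {
  smC :> sCatD;
  tensO : obj smC -> obj smC -> obj smC;
  tensH : forall (a a' b b' : obj smC) (k : nat),
      hom a a' k -> hom b b' k -> hom (tensO a b) (tensO a' b') k;
  unitO : obj smC;
  sm_sCat : is_sCat smC;
  tens_nat : forall a a' b b' m n (f : mono m n) (u : hom a a' n) (v : hom b b' n),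
      ssA f (tensH u v) = tensH (ssA f u) (ssA f v);
  tens_comp : forall a a' a'' b b' b'' k (u' : hom a' a'' k) (u : hom a a' k)
      (v' : hom b' b'' k) (v : hom b b' k),
      tensH (comp u' u) (comp v' v) = comp (tensH u' v') (tensH u v);
  tens_id : forall a b, tensH (idm a) (idm b) = idm (tensO a b);
  assocO : forall a b c, tensO (tensO a b) c = tensO a (tensO b c);
  assocH : forall a a' b b' c c' k (u : hom a a' k) (v : hom b b' k) (w : hom c c' k),
      castH (assocO a b c) (assocO a' b' c') (tensH (tensH u v) w)
      = tensH u (tensH v w);
  lunitO : forall a, tensO unitO a = a;
  lunitH : forall a a' k (u : hom a a' k),
      castH (lunitO a) (lunitO a') (tensH (idk unitO k) u) = u;
  runitO : forall a, tensO a unitO = a;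
  runitH : forall a a' k (u : hom a a' k),
      castH (runitO a) (runitO a') (tensH u (idk unitO k)) = u
}.

(* Iterated tensor products.  The empty tensor is the unit; the tensor  *)
(* of x_1,...,x_r is x_1 (x) (x_2 (x) ... (x_r (x) 1)), which by strict *)
(* associativity and unitality is the (bracketing-independent)          *)
(* x_1 (x) ... (x) x_r.                                                 *)

Section Iterated.
Variable C : SMsCat.

Definition tensL (s : seq (obj C)) : obj C := foldr (@tensO C) (unitO C) s.

Fixpoint tensLH (I : Type) (x y : I -> obj C) (k : nat) (js : seq I)
  (s : forall j, hom (x j) (y j) k) {struct js} :
  hom (tensL (map x js)) (tensL (map y js)) k :=
  match js return hom (tensL (map x js)) (tensL (map y js)) k with
  | [::] => idk (unitO C) k
  | j :: js' => tensH (s j) (@tensLH I x y k js' s)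
  end.

Lemma tensL_cat (s t : seq (obj C)) : tensL (s ++ t) = tensO (tensL s) (tensL t).
Proof.
elim: s => [|a s IH] /=; first by rewrite lunitO.
by rewrite /tensL /= -/(tensL (s ++ t)) IH assocO.
Qed.

Lemma tensL_flatten (ss : seq (seq (obj C))) :
  tensL (flatten ss) = tensL (map tensL ss).
Proof.
elim: ss => [|s ss IH] //=.
by rewrite tensL_cat IH.
Qed.

Lemma tensL1 (a : obj C) : a = tensL [:: a].
Proof. by rewrite /tensL /= runitO. Qed.

End Iterated.
Arguments tensL {C}.
Arguments tensLH {C I} x y k js s.

(* Blocks: for f : [m] -> [n] and 1 <= i <= m, the indices               *)
(* f(i-1)+1, ..., f(i) (in 0-based numbering: block i : 'I_m consists   *)
(* of the j : 'I_n with f(i) <= j < f(i+1)).                            *)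

Definition blk m n (f : mono m n) (i : 'I_m) : seq 'I_n :=
  [seq j : 'I_n <- enum 'I_n | (f (widen_ord (leqnSn m) i) <= (j : nat)) && ((j : nat) < f (lift ord0 i))].

Definition fnat m n (f : mono m n) (l : nat) : nat := f (inord (minn l m)).

Lemma fnat_val m n (f : mono m n) (i : 'I_m.+1) : fnat f i = f i.
Proof.
rewrite /fnat; have -> : minn i m = i by apply/minn_idPl; rewrite -ltnS.
by rewrite inord_val.
Qed.

Lemma fnat_mono m n (f : mono m n) : {homo fnat f : x y / x <= y}.
Proof.
move=> x y hxy; rewrite /fnat; apply: monoP.
by rewrite !inordK ?ltnS ?geq_minr // leq_min geq_minr andbT; exact: leq_trans (geq_minl _ _) hxy.
Qed.

Lemma filter_iota_interval a b n : a <= b -> b <= n ->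
  [seq j <- iota 0 n | (a <= j) && (j < b)] = iota a (b - a).
Proof.
move=> hab hbn.
have -> : n = a + (b - a) + (n - b) by lia.
rewrite !iotaD !filter_cat add0n.
rewrite (@eq_in_filter _ _ pred0 (iota 0 a)); last first.
  by move=> j; rewrite mem_iota /= => hj; rewrite (_ : a <= j = false) //; lia.
rewrite (@eq_in_filter _ _ predT (iota a (b - a))); last first.
  by move=> j; rewrite mem_iota /= => /andP[h1 h2]; rewrite (_ : a <= j) 1?(_ : j < b) //; lia.
rewrite (@eq_in_filter _ _ pred0 (iota (a + (b - a)) (n - b))); last first.
  by move=> j; rewrite mem_iota /= => /andP[h1 h2]; rewrite (_ : j < b = false) ?andbF //; lia.
by rewrite !filter_pred0 filter_predT cats0.
Qed.

Lemma map_val_filter_ord n (P : pred nat) :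
  map val [seq j <- enum 'I_n | P (val j)] = [seq j <- iota 0 n | P j].
Proof. by rewrite -val_enum_ord filter_map. Qed.

Lemma blk_val m n (f : mono m n) (i : 'I_m) :
  map val (blk f i) = iota (fnat f i) (fnat f i.+1 - fnat f i).
Proof.
have e1 : fnat f i = f (widen_ord (leqnSn m) i) by rewrite -fnat_val.
have e2 : fnat f i.+1 = f (lift ord0 i) by rewrite -fnat_val.
rewrite e1 e2 /blk.
rewrite (map_val_filter_ord n (fun j => (f (widen_ord (leqnSn m) i) <= j)
                                   && (j < f (lift ord0 i)))).
rewrite filter_iota_interval //.
  by apply: monoP; rewrite /= /bump /=; lia.
by rewrite -ltnS.
Qed.

Lemma flatten_iota (h : nat -> nat) : {homo h : x y / x <= y} ->
  forall d a, flatten [seq iota (h l) (h l.+1 - h l) | l <- iota a d]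
              = iota (h a) (h (a + d) - h a).
Proof.
move=> hm; elim=> [|d IH] a /=; first by rewrite addn0 subnn.
rewrite IH -addSnnS.
have h1 : h a <= h a.+1 by apply: hm.
have h2 : h a.+1 <= h (a.+1 + d) by apply: hm; lia.
have -> : h (a.+1 + d) - h a = (h a.+1 - h a) + (h (a.+1 + d) - h a.+1) by lia.
by rewrite iotaD subnKC.
Qed.

Lemma fnat_comp m n p (f : mono m n) (g : mono p m) (l : nat) :
  l <= p -> fnat (mono_comp f g) l = fnat f (fnat g l).
Proof.
move=> hl; rewrite /fnat /mono_comp /mono_fun /= ffunE.
have hg : (val g (inord (minn l p)) : nat) <= m by rewrite -ltnS.
by rewrite (minn_idPl hg) inord_val.
Qed.

Lemma blk_comp m n p (f : mono m n) (g : mono p m) (i : 'I_p) :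
  blk (mono_comp f g) i = flatten [seq blk f l | l <- blk g i].
Proof.
apply: (inj_map val_inj).
rewrite blk_val map_flatten -map_comp.
rewrite (eq_map (g := (fun l : nat => iota (fnat f l) (fnat f l.+1 - fnat f l)) \o val));
  last by move=> l /=; rewrite blk_val.
rewrite map_comp blk_val flatten_iota; last exact: fnat_mono.
have hg : fnat g i <= fnat g i.+1 by apply: fnat_mono.
rewrite subnKC // !fnat_comp //; exact: ltnW.
Qed.

Lemma blk_id n (i : 'I_n) : blk (mono_id n) i = [:: i].
Proof.
apply: (inj_map val_inj); rewrite blk_val /=.
have e : forall l, l <= n -> fnat (mono_id n) l = l.
  by move=> l hl; rewrite /fnat /mono_fun /= ffunE inordK ?ltnS ?geq_minr // (minn_idPl hl).
rewrite !e ?subSnn //; exact: ltnW.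
Qed.

Section BlockTensor.
Variable C : SMsCat.

Lemma tens_blk_comp m n p (f : mono m n) (g : mono p m) (i : 'I_p) (X : 'I_n -> obj C) :
  tensL (map (fun l => tensL (map X (blk f l))) (blk g i))
  = tensL (map X (blk (mono_comp f g) i)).
Proof. by rewrite blk_comp map_flatten tensL_flatten -!map_comp. Qed.

Lemma tens_blk_id n (X : 'I_n -> obj C) (i : 'I_n) :
  X i = tensL (map X (blk (mono_id n) i)).
Proof. by rewrite blk_id; exact: tensL1. Qed.

End BlockTensor.

(* The simplicial category C^(x).  Objects: finite sequences of objects; *)
(* the k-simplices of the hom from [x_1..x_n] to [y_1..y_m] are the      *)
(* pairs (f, (f_i)_i) with f in Delta([m],[n]) and                       *)
(* f_i a k-simplex of C(x_{f(i-1)+1} (x) ... (x) x_{f(i)}, y_i).         *)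

Section Cotimes.
Variable C : SMsCat.

Definition otX (xs : seq (obj C)) (j : 'I_(size xs)) : obj C := nth (unitO C) xs j.
Arguments otX : clear implicits.

Definition otHomX (xs ys : seq (obj C)) (k : nat) :=
  {f : mono (size ys) (size xs) &
     forall i : 'I_(size ys), hom (tensL (map (otX xs) (blk f i))) (otX ys i) k}.

Definition otHom (xs ys : seq (obj C)) : sSet :=
  @SSet (otHomX xs ys)
    (fun m n (a : mono m n) (h : otHomX xs ys n) =>
       existT _ (projT1 h) (fun i => ssA a (projT2 h i))).

(* [g; g_i] o [f; f_i] = [f o g; g_i o (f_{g(i-1)+1} (x) ... (x) f_{g(i)})] *)
Definition otComp (xs ys zs : seq (obj C)) (k : nat)
  (G : otHomX ys zs k) (F : otHomX xs ys k) : otHomX xs zs k :=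
  existT _ (mono_comp (projT1 F) (projT1 G))
    (fun i => castH (tens_blk_comp (projT1 F) (projT1 G) i (otX xs)) erefl
       (comp (projT2 G i)
          (tensLH (fun l => tensL (map (otX xs) (blk (projT1 F) l))) (otX ys) k
             (blk (projT1 G) i) (projT2 F)))).

Definition otId (xs : seq (obj C)) : otHomX xs xs 0 :=
  existT _ (mono_id (size xs))
    (fun i => castH (tens_blk_id (otX xs) i) erefl (idm (otX xs i))).

Definition Cotimes : sCatD := @SCatD (seq (obj C)) otHom otComp otId.

End Cotimes.

Section Cbullet.
Variable C : SMsCat.

Definition prodHom n (x y : 'I_n -> obj C) : sSet :=
  @SSet (fun k => forall i : 'I_n, hom (x i) (y i) k)
    (fun m p (a : mono m p) h i => ssA a (h i)).

Definition prodC (n : nat) : sCatD :=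
  @SCatD ('I_n -> obj C) (@prodHom n)
    (fun x y z k g h i => comp (g i) (h i)) (fun x i => idm (x i)).

(* C^f : C^n -> C^m for f : [m] -> [n], (x_j)_j |-> (x_{f(i-1)+1} (x) ... (x) x_{f(i)})_i *)
Definition Cf m n (f : mono m n) : sFun (prodC n) (prodC m) :=
  @SFun (prodC n) (prodC m)
    (fun x i => tensL (map x (blk f i)))
    (fun x y k h i => tensLH x y k (blk f i) h).

End Cbullet.

Record CatD := CatDMk {
  cob : Type;
  chom : cob -> cob -> Type;
  ccomp : forall a b c, chom b c -> chom a b -> chom a c;
  cid : forall a, chom a a
}.
Arguments ccomp {_ _ _ _}.
Arguments cid {_}.

(* Delta^op: a morphism c -> d is a map [d] -> [c] of Delta *)
Definition DeltaOp : CatD :=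
  @CatDMk nat (fun c d => mono d c)
    (fun a b c (psi : mono c b) (phi : mono b a) => mono_comp phi psi)
    mono_id.

(* a functor F : D -> sCat (the data; the functoriality on objects is     *)
(* recorded since it is needed to even define the composition of Gr F)   *)
Record sCatDiag (D : CatD) := SCatDiag {
  Fc : cob D -> sCatD;
  Fm : forall c d : cob D, chom c d -> sFun (Fc c) (Fc d);
  Fid_o : forall c (x : obj (Fc c)), fo (Fm (cid c)) x = x;
  Fcomp_o : forall c d e (phi : chom c d) (psi : chom d e) (x : obj (Fc c)),
      fo (Fm (ccomp psi phi)) x = fo (Fm psi) (fo (Fm phi) x)
}.
Arguments Fc {D}.
Arguments Fm {D} s {c d}.
Arguments Fcomp_o {D} s {c d e} phi psi x.
Arguments Fid_o {D} s {c} x.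

Section Grothendieck.
Variables (D : CatD) (F : sCatDiag D).

Definition GrObj := {c : cob D & obj (Fc F c)}.

Definition GrHomX (a b : GrObj) (k : nat) :=
  {phi : chom (projT1 a) (projT1 b) & hom (fo (Fm F phi) (projT2 a)) (projT2 b) k}.

Definition GrHom (a b : GrObj) : sSet :=
  @SSet (GrHomX a b)
    (fun m n (al : mono m n) (h : GrHomX a b n) => existT _ (projT1 h) (ssA al (projT2 h))).

(* (tau, psi) o (sigma, phi) = (tau o F psi (sigma), psi phi) *)
Definition GrComp (a b c : GrObj) (k : nat) (H : GrHomX b c k) (G : GrHomX a b k) :
  GrHomX a c k :=
  existT _ (ccomp (projT1 H) (projT1 G))
    (castH (esym (Fcomp_o F (projT1 G) (projT1 H) (projT2 a))) erefl
       (comp (projT2 H) (fh (Fm F (projT1 H)) (projT2 G)))).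

Definition GrId (a : GrObj) : GrHomX a a 0 :=
  existT _ (cid (projT1 a)) (castH (esym (Fid_o F (projT2 a))) erefl (idm (projT2 a))).

Definition Gr : sCatD := @SCatD GrObj GrHom GrComp GrId.

End Grothendieck.

Section CbulletDiag.
Variable C : SMsCat.

Lemma Cbullet_id (c : nat) (x : 'I_c -> obj C) : fo (Cf C (mono_id c)) x = x.
Proof.
apply: functional_extensionality => i /=; by rewrite -tens_blk_id.
Qed.

Lemma Cbullet_comp c d e (phi : mono d c) (psi : mono e d) (x : 'I_c -> obj C) :
  fo (Cf C (mono_comp phi psi)) x = fo (Cf C psi) (fo (Cf C phi) x).
Proof.
apply: functional_extensionality => i /=; by rewrite tens_blk_comp.
Qed.

Definition Cbullet : sCatDiag DeltaOp :=
  @SCatDiag DeltaOp (prodC C) (fun c d (f : mono d c) => Cf C f)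
    Cbullet_id Cbullet_comp.

End CbulletDiag.

From mathcomp Require Import all_boot.
From Stdlib Require Import FunctionalExtensionality ProofIrrelevance.

Set Implicit Arguments.
Unset Strict Implicit.
Unset Printing Implicit Defensive.

(* An object of Gr C^bullet is a pair (n, x) with x : 'I_n -> obj C, i.e. a
   sequence of objects of C.  A k-simplex of the hom from (n, x) to (m, y) is a
   pair (f : [m] -> [n], sigma) with sigma_i a k-simplex of
   C(x_{f(i-1)+1} (x) ... (x) x_{f(i)}, y_i): literally a k-simplex of the hom
   of C^(x).  So the isomorphism is the identity on simplices and the
   sequence/family correspondence on objects.  Both compositions are
   g_i o (f_{g(i-1)+1} (x) ... (x) f_{g(i)}), transported along two proofs of
   the same equality of objects of C, which agree by proof irrelevance. *)

Section SeqFamily.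
Variables (T : Type) (x0 : T).

Definition fam_of_seq (s : seq T) : {n : nat & 'I_n -> T} :=
  existT _ (size s) (fun i : 'I_(size s) => nth x0 s i).

Definition seq_of_fam (a : {n : nat & 'I_n -> T}) : seq T :=
  [seq projT2 a i | i <- enum 'I_(projT1 a)].

Lemma fam_eq_cast m n (e : m = n) (y : 'I_m -> T) (x : 'I_n -> T) :
  (forall i : 'I_m, y i = x (cast_ord e i)) ->
  existT (fun c : nat => 'I_c -> T) m y = existT _ n x.
Proof.
case: n / e x => x eyx; congr existT; apply: functional_extensionality => i.
by rewrite eyx cast_ord_id.
Qed.

Lemma fam_of_seqK : cancel fam_of_seq seq_of_fam.
Proof.
move=> s; rewrite /seq_of_fam /= (eq_map (g := nth x0 s \o val)) //.
by rewrite map_comp val_enum_ord; exact: mkseq_nth.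
Qed.

Lemma seq_of_famK : cancel seq_of_fam fam_of_seq.
Proof.
case=> n x; have e : size (seq_of_fam (existT _ n x)) = n.
  by rewrite size_map size_enum_ord.
apply: (@fam_eq_cast _ _ e) => i /=.
have ei_lt_n : cast_ord e i < n := ltn_ord _.
rewrite (set_nth_default (x (cast_ord e i))) // (nth_map (cast_ord e i)).
  by congr x; apply: val_inj; rewrite /= nth_enum_ord.
by rewrite size_enum_ord.
Qed.

Lemma fam_of_seq_bij : bijective fam_of_seq.
Proof. exact: Bijective fam_of_seqK seq_of_famK. Qed.

End SeqFamily.

Lemma castH_irrelevance (C : sCatD) (a a' b b' : obj C) (ea ea' : a = a')
    (eb eb' : b = b') k (h : hom a b k) :
  castH ea eb h = castH ea' eb' h.
Proof. by rewrite (proof_irrelevance _ ea ea') (proof_irrelevance _ eb eb'). Qed.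

Section CotimesGr.
Variable C : SMsCat.

Lemma castH_prodC n (x x' y : 'I_n -> obj C) (e : x = x')
    (e_ : forall i, x i = x' i) k (h : hom (s := prodC C n) x y k) :
  castH (C := prodC C n) e erefl h = fun i => castH (e_ i) erefl (h i).
Proof.
case: x' / e e_ => e_; apply: functional_extensionality_dep => i.
exact: (castH_irrelevance erefl (e_ i) erefl erefl).
Qed.

Definition Cotimes_to_Gr : sFun (Cotimes C) (Gr (Cbullet C)) :=
  @SFun (Cotimes C) (Gr (Cbullet C)) (fam_of_seq (unitO C)) (fun xs ys k h => h).

Lemma Cotimes_to_Gr_functor : is_sFunctor Cotimes_to_Gr.
Proof.
split=> // [xs ys zs k G F | xs]; congr existT; symmetry; exact: castH_prodC.
Qed.

End CotimesGr.

Theorem lemma4p9 (C : SMsCat) : sCat_iso (Cotimes C) (Gr (Cbullet C)).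
Proof.
exists (Cotimes_to_Gr C); split.
- exact: Cotimes_to_Gr_functor.
- exact: fam_of_seq_bij.
- by move=> xs ys k; exists id.
Qed.
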